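(* Consider the packet spreading algorithm described in the context with $N=2$ and $K_1\ge K_2$. For every iteration $k\in\{0,1,\dots,K-1\}$, letting $i=m_k$ be the source selected in iteration $k$ and $j$ the other source (i.e. $j=3-i$), we have $$\tilde Q_j^{k+1}=\frac{x_j^k+1}{K_j}-\frac{x_i^k}{K_i}.$$
   Context: Packet spreading algorithm: Let $N\ge 2$, let $K_1,\dots,K_N$ be positive integers and $K=\sum_{n=1}^N K_n$. The algorithm runs iterations $k=0,1,\dots,K-1$ and maintains deficit counters $B_n^k$, $1\le n\le N$, with $B_n^0=0$ for all $n$. In iteration $k$, define the quantums $Q_n^k=\frac{(1-B_n^k)K}{K_n}$; select a source $m_k\in\arg\min_{1\le n\le N} Q_n^k$ (ties broken arbitrarily); let $Q=Q_{m_k}^k$; set $B_n^{k+1}=B_n^k+Q\frac{K_n}{K}$ for $n\neq m_k$ and $B_{m_k}^{k+1}=0$; and set the $k$-th entry of the output pattern to $P(k)=m_k$. Normalized quantums: $\tilde Q_n^k=Q_n^k/K=(1-B_n^k)/K_n$. For $0\le k\le K-1$, $x_n^k$ denotes the number of indices $k'\in\{0,\dots,k\}$ with $m_{k'}=n$, i.e. the number of source-$n$ instances inserted into the pattern after iteration $k$. *)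

From mathcomp Require Import all_boot all_order all_algebra.
Set Implicit Arguments. Unset Strict Implicit. Unset Printing Implicit Defensive.
Import Order.TTheory GRing.Theory Num.Theory.
Local Open Scope ring_scope.

(* K n : the (positive) number of packets of source n; Ktot = sum of K n.
   m k : the source selected in iteration k (the tie-breaking is left free:
         validity of a run is the hypothesis [valid_run] below). *)
Section PacketSpreading.
Variables (R : realFieldType) (N : nat) (K : 'I_N -> nat).

Definition Ktot : nat := (\sum_(n < N) K n)%N.

Definition quantum (B : 'I_N -> R) (n : 'I_N) : R :=
  (1 - B n) * (Ktot%:R) / (K n)%:R.

Definition nquantum (B : 'I_N -> R) (n : 'I_N) : R :=
  (1 - B n) / (K n)%:R.

Fixpoint deficit (m : nat -> 'I_N) (k : nat) : 'I_N -> R :=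
  match k with
  | 0 => fun _ => 0
  | k'.+1 => fun n =>
      let Bk := deficit m k' in
      if n == m k' then 0
      else Bk n + quantum Bk (m k') * (K n)%:R / (Ktot%:R)
  end.

Definition valid_run (m : nat -> 'I_N) : Prop :=
  forall k, (k < Ktot)%N ->
    forall n, quantum (deficit m k) (m k) <= quantum (deficit m k) n.

Definition inserted (m : nat -> 'I_N) (n : 'I_N) (k : nat) : nat :=
  (\sum_(0 <= k' < k.+1) (m k' == n))%N.

End PacketSpreading.

(* Selecting source i resets its normalized quantum to 1/K_i, while every other
   normalized quantum drops by the selected one's, Q~_i^k = Q_i^k / K.  Hence all
   normalized quantums after iteration k share the offset x_{m_k}^k / K_{m_k}
   from (x_n^k + 1) / K_n, which is the theorem for N = 2. *)
From mathcomp Require Import all_boot all_order all_algebra.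
From mathcomp Require Import ring.
Set Implicit Arguments. Unset Strict Implicit. Unset Printing Implicit Defensive.
Import Order.TTheory GRing.Theory Num.Theory.
Local Open Scope ring_scope.

Section NormalizedQuantums.
Variables (R : realFieldType) (N : nat) (K : 'I_N -> nat) (m : nat -> 'I_N).
Hypothesis K_gt0 : forall n, (0 < K n)%N.

Let K_neq0 n : (K n)%:R != 0 :> R.
Proof. by rewrite pnatr_eq0 -lt0n K_gt0. Qed.

Lemma Ktot_gt0 (n : 'I_N) : (0 < Ktot K)%N.
Proof. by rewrite /Ktot (bigD1 n) //= addn_gt0 K_gt0. Qed.

Lemma insertedS n k : inserted m n k.+1 = (inserted m n k + (m k.+1 == n))%N.
Proof. by rewrite /inserted big_nat_recr. Qed.

Lemma inserted0 n : inserted m n 0 = (m 0 == n).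
Proof. by rewrite /inserted big_nat1. Qed.

Lemma nquantum_deficit0 n : nquantum K (deficit R K m 0) n = (K n)%:R^-1.
Proof. by rewrite /nquantum subr0 mul1r. Qed.

Lemma nquantum_deficitS k n :
  nquantum K (deficit R K m k.+1) n =
    if n == m k then (K n)%:R^-1
    else nquantum K (deficit R K m k) n - nquantum K (deficit R K m k) (m k).
Proof.
rewrite /nquantum /=; case: eqP => _; first by rewrite subr0 mul1r.
have Ktot_neq0 : (Ktot K)%:R != 0 :> R by rewrite pnatr_eq0 -lt0n (Ktot_gt0 n).
by rewrite /quantum; field; rewrite !K_neq0 Ktot_neq0.
Qed.

Lemma nquantum_deficit_inserted k n :
  nquantum K (deficit R K m k.+1) n =
    (inserted m n k).+1%:R / (K n)%:R - (inserted m (m k) k)%:R / (K (m k))%:R.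
Proof.
elim: k n => [|k IH] n; rewrite nquantum_deficitS.
  rewrite !nquantum_deficit0 !inserted0 eqxx eq_sym.
  case: eqP => [->|_]; first by field; rewrite K_neq0.
  by rewrite !mul1r.
rewrite !insertedS eqxx eq_sym; case: eqP => [->|_].
  by rewrite addn1; field; rewrite K_neq0.
by rewrite !IH addn0 addn1; field; rewrite !K_neq0.
Qed.

End NormalizedQuantums.

Theorem mainTheorem2 (R : realFieldType) (K : 'I_2 -> nat) (m : nat -> 'I_2) :
  (forall n, (0 < K n)%N) ->
  (K ord0 >= K ord_max)%N ->
  valid_run R K m ->
  forall k : nat, (k < Ktot K)%N ->
  forall i j : 'I_2, i = m k -> j != i ->
    nquantum K (deficit R K m k.+1) j =
      ((inserted m j k).+1)%:R / (K j)%:R - (inserted m i k)%:R / (K i)%:R.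
Proof.
move=> K_gt0 _ _ k _ i j -> _.
exact: (nquantum_deficit_inserted R m K_gt0).
Qed.
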